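(* Let $f$ be a rational function with real coefficients such that $\int_{-\infty}^{\infty}f(x)\,dx$ is finite (absolutely convergent). Then $$\int_{-\infty}^{\infty}f(x)\,dx=\int_{-\infty}^{\infty}\Big[f\big(y+\sqrt{y^{2}+1}\big)+f\big(y-\sqrt{y^{2}+1}\big)\Big]dy+\int_{-\infty}^{\infty}\Big[f\big(y+\sqrt{y^{2}+1}\big)-f\big(y-\sqrt{y^{2}+1}\big)\Big]\frac{y\,dy}{\sqrt{y^{2}+1}}.$$ Moreover, if $f$ is even, the identity remains valid when every interval of integration $(-\infty,\infty)$ is replaced by $(0,\infty)$. *)

From Stdlib Require Import Reals Lra List.
Open Scope R_scope.

(* Evaluation of a real polynomial given by its coefficient list
   [a0; a1; ...; an] (a0 + a1 x + ... + an x^n), by Horner's scheme. *)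
Definition peval (p : list R) (x : R) : R :=
  fold_right (fun a acc => a + x * acc) 0 p.

Definition nonzero_poly (q : list R) : Prop := exists c, In c q /\ c <> 0.

(* f is a rational function with real coefficients: f = P/Q with Q <> 0,
   f being equal to P(x)/Q(x) wherever Q(x) <> 0 (values at the finitely
   many real zeros of Q are irrelevant). *)
Definition is_rational_fun (f : R -> R) : Prop :=
  exists p q : list R, nonzero_poly q /\
    forall x, peval q x <> 0 -> f x = peval p x / peval q x.

Definition improper_int_R (f : R -> R) (l : R) : Prop :=
  (forall a b, inhabited (Riemann_integrable f a b)) /\
  forall eps, eps > 0 -> exists M, forall a b (pr : Riemann_integrable f a b),
    a <= - M -> M <= b -> Rabs (RiemannInt pr - l) < eps.

Definition improper_int_pos (f : R -> R) (l : R) : Prop :=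
  (forall b, inhabited (Riemann_integrable f 0 b)) /\
  forall eps, eps > 0 -> exists M, forall b (pr : Riemann_integrable f 0 b),
    M <= b -> Rabs (RiemannInt pr - l) < eps.

Definition rhs_integrand (f : R -> R) (y : R) : R :=
  (f (y + sqrt (y ^ 2 + 1)) + f (y - sqrt (y ^ 2 + 1)))
  + (f (y + sqrt (y ^ 2 + 1)) - f (y - sqrt (y ^ 2 + 1)))
    * (y / sqrt (y ^ 2 + 1)).

(* Put u(y) = y + sqrt(y^2+1) and v(y) = y - sqrt(y^2+1).  If G is a
   primitive of a continuous function g, then H(y) = G(u y) + G(v y) is a
   primitive of the right-hand-side integrand built from g, because
   u' = 1 + y/sqrt(y^2+1) and v' = 1 - y/sqrt(y^2+1).  As b -> +oo we have
   u b -> +oo, v b -> 0-, and as a -> -oo we have u a -> 0+, v a -> -oo, so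
   H b - H a = (G(u b) - G(v a)) + (G(v b) - G(u a)) tends to the integral
   of g over the line.  For even g, G is odd and the half-line statement
   follows the same way with H 0 = G 1 + G (-1) = 0.

   The integrand f is only a rational function, possibly with poles, but it
   is Riemann integrable on every compact interval, hence locally bounded;
   a locally bounded rational function has removable singularities only, so
   f coincides off a finite set with a continuous function g, and finitely
   many point values do not change Riemann integrals. *)
From Stdlib Require Import Reals Lra Lia List Classical FunctionalExtensionality IndefiniteDescription.
Open Scope R_scope.

(* Synthetic division: the quotient of p by X - z (coefficients in
   increasing degree). *)
Fixpoint pdiv (z : R) (p : list R) : list R :=
  match p with
  | nil => nil
  | a :: l => match l with nil => nil | _ => peval l z :: pdiv z l end
  end.

Lemma peval_cons a l x : peval (a :: l) x = a + x * peval l x.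
Proof. reflexivity. Qed.

Lemma peval_pdiv z p x : peval p x = peval p z + (x - z) * peval (pdiv z p) x.
Proof.
  induction p as [|a l IH]; [simpl; ring|].
  destruct l as [|b l']; [simpl; ring|].
  change (pdiv z (a :: b :: l')) with (peval (b :: l') z :: pdiv z (b :: l')).
  rewrite !peval_cons, IH at 1. rewrite (peval_cons _ _ z). ring.
Qed.

Lemma pdiv_length z p : length (pdiv z p) = pred (length p).
Proof.
  induction p as [|a l IH]; [reflexivity|].
  destruct l as [|b l']; [reflexivity|].
  change (pdiv z (a :: b :: l')) with (peval (b :: l') z :: pdiv z (b :: l')).
  simpl length. simpl in IH. rewrite IH. reflexivity.
Qed.

Lemma pdiv_zero z p : peval p z = 0 -> (forall c, In c (pdiv z p) -> c = 0) ->
  forall c, In c p -> c = 0.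
Proof.
  induction p as [|a l IH]; [simpl; tauto|].
  destruct l as [|b l'].
  - simpl. intros H _ c [Hc|[]]. subst. lra.
  - change (pdiv z (a :: b :: l')) with (peval (b :: l') z :: pdiv z (b :: l')).
    intros H0 H1.
    assert (Hb : peval (b :: l') z = 0) by (apply H1; left; reflexivity).
    assert (Htail : forall c, In c (b :: l') -> c = 0).
    { apply IH; [exact Hb|]. intros c Hc. apply H1. right. exact Hc. }
    rewrite peval_cons, Hb in H0.
    intros c [Hc|Hc]; [subst; lra | apply Htail; exact Hc].
Qed.

Lemma pdiv_nonzero z q : peval q z = 0 -> nonzero_poly q -> nonzero_poly (pdiv z q).
Proof.
  intros H [c [Hc Hc0]]. apply NNPP. intro Hn. apply Hc0.
  apply (pdiv_zero z q H); [|exact Hc].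
  intros d Hd. apply NNPP. intro Hd0. apply Hn. exists d. auto.
Qed.

Lemma poly_roots_finite q : nonzero_poly q -> exists L, forall x, peval q x = 0 -> In x L.
Proof.
  remember (length q) as n eqn:En. assert (Hl : (length q <= n)%nat) by lia. clear En.
  revert q Hl. induction n as [|n IH]; intros q Hl Hq.
  - destruct q; [destruct Hq as [c [[] _]] | simpl in Hl; lia].
  - destruct (classic (exists z, peval q z = 0)) as [[z Hz]|Hn].
    + destruct (IH (pdiv z q)) as [L HL].
      * rewrite pdiv_length. lia.
      * apply pdiv_nonzero; assumption.
      * exists (z :: L). intros x Hx. rewrite (peval_pdiv z), Hz in Hx.
        destruct (Rmult_integral (x - z) (peval (pdiv z q) x)) as [H|H]; [lra| |].
        -- left. lra.
        -- right. apply HL. exact H.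
    + exists nil. intros x Hx. exfalso. apply Hn. exists x. exact Hx.
Qed.

Lemma peval_continuous p : continuity (peval p).
Proof.
  induction p as [|a l IH]; intro x.
  - apply continuity_pt_const. intros u v. reflexivity.
  - change (continuity_pt (plus_fct (fct_cte a) (mult_fct id (peval l))) x).
    apply continuity_pt_plus.
    + apply continuity_pt_const. intros u v. reflexivity.
    + apply continuity_pt_mult; [apply derivable_continuous_pt, derivable_pt_id | apply IH].
Qed.

Lemma interval_avoids_list L : forall a b, a < b -> exists y, a < y < b /\ ~ In y L.
Proof.
  induction L as [|c L IH]; intros a b Hab.
  - exists ((a + b) / 2). split; [lra | simpl; tauto].
  - destruct (IH a b Hab) as [y [Hy Hn]].
    destruct (Req_dec y c) as [->|Hyc].
    + destruct (IH a c (proj1 Hy)) as [y' [Hy' Hn']].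
      exists y'. split; [lra|]. intros [H|H]; [lra|tauto].
    + exists y. split; [exact Hy|]. intros [H|H]; [congruence|tauto].
Qed.

Lemma list_isolated L x0 :
  exists r, r > 0 /\ forall y, y <> x0 -> Rabs (y - x0) < r -> ~ In y L.
Proof.
  induction L as [|c L IH].
  - exists 1. split; [lra | simpl; tauto].
  - destruct IH as [r [Hr H]].
    destruct (Req_dec c x0) as [->|Hc].
    + exists r. split; [exact Hr|]. intros y Hy Hd [Hi|Hi]; [congruence | apply (H y); auto].
    + exists (Rmin r (Rabs (c - x0))). split.
      * apply Rmin_pos; [exact Hr | apply Rabs_pos_lt; lra].
      * intros y Hy Hd [Hi|Hi].
        -- subst. pose proof (Rmin_r r (Rabs (y - x0))). lra.
        -- apply (H y); auto. pose proof (Rmin_l r (Rabs (c - x0))). lra.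
Qed.

Lemma continuity_pt_eps F x : continuity_pt F x -> forall eps, eps > 0 ->
  exists d, d > 0 /\ forall y, Rabs (y - x) < d -> Rabs (F y - F x) < eps.
Proof.
  intros H eps He. destruct (H eps He) as [d [Hd Hy]].
  exists d. split; [exact Hd|]. intros y Hyd.
  destruct (Req_dec y x) as [->|Hn].
  - rewrite Rminus_diag, Rabs_R0. exact He.
  - apply (Hy y). split; [split; [exact I | auto] | exact Hyd].
Qed.

Definition punct_lim (f : R -> R) (x0 c : R) : Prop :=
  forall eps, eps > 0 -> exists d, d > 0 /\ forall y, y <> x0 -> Rabs (y - x0) < d ->
    Rabs (f y - c) < eps.

Lemma punct_lim_unique f x c1 c2 : punct_lim f x c1 -> punct_lim f x c2 -> c1 = c2.
Proof.
  intros H1 H2. apply NNPP. intro Hn.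
  assert (He : Rabs (c1 - c2) / 2 > 0)
    by (apply Rdiv_lt_0_compat; [apply Rabs_pos_lt; lra | lra]).
  destruct (H1 _ He) as [d1 [Hd1 K1]]. destruct (H2 _ He) as [d2 [Hd2 K2]].
  set (y := x + Rmin d1 d2 / 2).
  assert (Hm : Rmin d1 d2 > 0) by (apply Rmin_pos; lra).
  assert (Hy : y <> x) by (unfold y; lra).
  assert (Hyd : Rabs (y - x) = Rmin d1 d2 / 2) by (unfold y; rewrite Rabs_right; lra).
  pose proof (Rmin_l d1 d2). pose proof (Rmin_r d1 d2).
  specialize (K1 y Hy ltac:(lra)). specialize (K2 y Hy ltac:(lra)).
  pose proof (Rabs_triang (c1 - f y) (f y - c2)) as T.
  replace (c1 - f y + (f y - c2)) with (c1 - c2) in T by ring.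
  rewrite Rabs_minus_sym in K1. lra.
Qed.

Lemma le_of_forall_lt_add a b : (forall e, e > 0 -> a < b + e) -> a <= b.
Proof.
  intros H. destruct (Rle_lt_dec a b) as [h|h]; [exact h|].
  specialize (H ((a - b) / 2) ltac:(lra)). lra.
Qed.

(* A function g which is at every point the punctured limit of some f is
   continuous: near x0, g y is close to values f w, which are close to g x0. *)
Lemma punct_lim_continuous f g : (forall x, punct_lim f x (g x)) -> continuity g.
Proof.
  intros H x0 eps He.
  destruct (H x0 (eps / 2) ltac:(lra)) as [d [Hd K]].
  exists d. split; [exact Hd|]. intros y [[_ Hy] Hyd]. simpl in *. unfold R_dist in *.
  assert (Hle : Rabs (g y - g x0) <= eps / 2).
  { apply le_of_forall_lt_add. intros e He'.
    destruct (H y e He') as [d' [Hd' K']].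
    set (m := Rmin d' (d - Rabs (y - x0))).
    assert (Hm : m > 0) by (unfold m; apply Rmin_pos; lra).
    destruct (interval_avoids_list (y :: x0 :: nil) y (y + m)) as [w [Hw Hnw]]; [lra|].
    assert (Hwy : w <> y) by (intro E; apply Hnw; left; auto).
    assert (Hwx : w <> x0) by (intro E; apply Hnw; right; left; auto).
    pose proof (Rmin_l d' (d - Rabs (y - x0))) as R1.
    pose proof (Rmin_r d' (d - Rabs (y - x0))) as R2. fold m in R1, R2.
    specialize (K' w Hwy ltac:(rewrite Rabs_right; lra)).
    assert (Hwx0 : Rabs (w - x0) < d).
    { pose proof (Rabs_triang (w - y) (y - x0)) as T.
      replace (w - y + (y - x0)) with (w - x0) in T by ring.
      rewrite (Rabs_right (w - y)) in T; lra. }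
    specialize (K w Hwx Hwx0).
    pose proof (Rabs_triang (g y - f w) (f w - g x0)) as T.
    replace (g y - f w + (f w - g x0)) with (g y - g x0) in T by ring.
    rewrite Rabs_minus_sym in K'. lra. }
  lra.
Qed.

Definition rat_bounded_near (p q : list R) (z : R) : Prop :=
  exists M d, d > 0 /\ forall y, y <> z -> Rabs (y - z) < d -> peval q y <> 0 ->
    Rabs (peval p y / peval q y) <= M.

Definition rat_limit (p q : list R) (z c : R) : Prop :=
  forall eps, eps > 0 -> exists d, d > 0 /\ forall y, y <> z ->
    Rabs (y - z) < d -> peval q y <> 0 -> Rabs (peval p y / peval q y - c) < eps.

Lemma rat_limit_regular p q z : peval q z <> 0 ->
  rat_limit p q z (peval p z / peval q z).
Proof.
  intros Hqz eps He.
  assert (Hc : continuity_pt (fun y => peval p y / peval q y) z).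
  { change (continuity_pt (div_fct (peval p) (peval q)) z).
    apply continuity_pt_div; [apply peval_continuous | apply peval_continuous | exact Hqz]. }
  destruct (continuity_pt_eps _ _ Hc eps He) as [d [Hd H]].
  exists d. split; [exact Hd|]. intros y _ Hy _. apply H. exact Hy.
Qed.

(* At a genuine pole (q z = 0, p z <> 0) the quotient is unbounded: near z,
   |p| stays above |p z|/2 while |q| becomes arbitrarily small. *)
Lemma rat_pole_unbounded p q z : nonzero_poly q -> peval q z = 0 -> peval p z <> 0 ->
  ~ rat_bounded_near p q z.
Proof.
  intros Hq Hqz Hpz [M [d [Hd HM]]].
  destruct (poly_roots_finite q Hq) as [L HL].
  set (A := Rabs (peval p z)).
  assert (HA : A > 0) by (apply Rabs_pos_lt; exact Hpz).
  set (K := Rabs M + 1).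
  assert (HK : K > 0) by (unfold K; pose proof (Rabs_pos M); lra).
  destruct (continuity_pt_eps _ _ (peval_continuous p z) (A / 2)) as [d1 [Hd1 H1]]; [lra|].
  destruct (continuity_pt_eps _ _ (peval_continuous q z) (A / (2 * K))) as [d2 [Hd2 H2]].
  { apply Rdiv_lt_0_compat; lra. }
  set (m := Rmin d (Rmin d1 d2)).
  assert (Hm : m > 0) by (unfold m; repeat apply Rmin_pos; lra).
  assert (Hm1 : m <= d) by apply Rmin_l.
  assert (Hm2 : m <= d1) by (unfold m; eapply Rle_trans; [apply Rmin_r | apply Rmin_l]).
  assert (Hm3 : m <= d2) by (unfold m; eapply Rle_trans; [apply Rmin_r | apply Rmin_r]).
  destruct (interval_avoids_list L z (z + m)) as [y [Hy Hny]]; [lra|].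
  assert (Hqy : peval q y <> 0) by (intro E; apply Hny, HL, E).
  assert (Hyd : Rabs (y - z) < m) by (rewrite Rabs_right; lra).
  specialize (HM y ltac:(lra) ltac:(lra) Hqy).
  specialize (H1 y ltac:(lra)). specialize (H2 y ltac:(lra)).
  rewrite Hqz, Rminus_0_r in H2.
  assert (Hpy : Rabs (peval p y) > A / 2).
  { pose proof (Rabs_triang_inv (peval p z) (peval p y)).
    rewrite Rabs_minus_sym in H1. fold A in H. lra. }
  assert (Hqpos : Rabs (peval q y) > 0) by (apply Rabs_pos_lt; exact Hqy).
  unfold Rdiv in HM; rewrite Rabs_mult, Rabs_inv in HM.
  assert (Hsmall : K * Rabs (peval q y) < A / 2).
  { apply (Rmult_lt_compat_l K) in H2; [|exact HK].
    replace (K * (A / (2 * K))) with (A / 2) in H2 by (field; lra). exact H2. }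
  assert (Hbig : Rabs (peval p y) / Rabs (peval q y) > K).
  { apply Rmult_gt_reg_r with (Rabs (peval q y)); [exact Hqpos|].
    unfold Rdiv. rewrite Rmult_assoc, Rinv_l by lra. lra. }
  pose proof (Rle_abs M). unfold K in *. lra.
Qed.

Lemma rat_cancel_root p q z y : peval p z = 0 -> peval q z = 0 -> y <> z ->
  (peval q y <> 0 <-> peval (pdiv z q) y <> 0) /\
  peval p y / peval q y = peval (pdiv z p) y / peval (pdiv z q) y.
Proof.
  intros Hpz Hqz Hyz.
  assert (Hq' : peval q y = (y - z) * peval (pdiv z q) y)
    by (rewrite (peval_pdiv z q y), Hqz; ring).
  assert (Hp' : peval p y = (y - z) * peval (pdiv z p) y)
    by (rewrite (peval_pdiv z p y), Hpz; ring).
  assert (Hd : y - z <> 0) by lra.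
  rewrite Hq', Hp'. split.
  - split; intros H E; apply H; [rewrite E; ring | ].
    destruct (Rmult_integral _ _ E); [contradiction | assumption].
  - destruct (Req_dec (peval (pdiv z q) y) 0) as [E|E].
    + rewrite E, Rmult_0_r. unfold Rdiv. rewrite !Rinv_0. ring.
    + field. split; assumption.
Qed.

(* Main fact: a rational function bounded near z has a limit at z.  Common
   roots are cancelled until q z <> 0 (a genuine pole being excluded by
   boundedness); the induction is on the length of q. *)
Lemma rat_bounded_has_limit p q z : nonzero_poly q ->
  rat_bounded_near p q z -> exists c, rat_limit p q z c.
Proof.
  remember (length q) as n eqn:En. assert (Hl : (length q <= n)%nat) by lia. clear En.
  revert p q Hl. induction n as [|n IH]; intros p q Hl Hq Hb.
  - destruct q; [destruct Hq as [c [[] _]] | simpl in Hl; lia].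
  - destruct (Req_dec (peval q z) 0) as [Hqz|Hqz]; [| eexists; exact (rat_limit_regular p q z Hqz)].
    destruct (Req_dec (peval p z) 0) as [Hpz|Hpz];
      [| exfalso; exact (rat_pole_unbounded p q z Hq Hqz Hpz Hb)].
    destruct (IH (pdiv z p) (pdiv z q)) as [c Hc].
    + rewrite pdiv_length. lia.
    + apply pdiv_nonzero; assumption.
    + destruct Hb as [M [d [Hd HM]]]. exists M, d. split; [exact Hd|].
      intros y Hy Hyd Hqy.
      destruct (rat_cancel_root p q z y Hpz Hqz Hy) as [Hdom Heq].
      rewrite <- Heq. apply HM; [exact Hy | exact Hyd | apply Hdom; exact Hqy].
    + exists c. intros eps He. destruct (Hc eps He) as [d [Hd H]].
      exists d. split; [exact Hd|]. intros y Hy Hyd Hqy.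
      destruct (rat_cancel_root p q z y Hpz Hqz Hy) as [Hdom Heq].
      rewrite Heq. apply H; [exact Hy | exact Hyd | apply Hdom; exact Hqy].
Qed.

Lemma stepfun_bounded l : forall f a b lf, a <= b -> adapted_couple f a b l lf ->
  exists M, forall t, a <= t <= b -> Rabs (f t) <= M.
Proof.
  induction l as [|r1 l IH]; intros f a b lf Hab H.
  - destruct H as [_ [_ [_ [H _]]]]. simpl in H. discriminate.
  - destruct l as [|r2 l].
    + destruct H as [_ [H0 [H1 _]]]. simpl in H0, H1.
      rewrite Rmin_left in H0 by lra. rewrite Rmax_right in H1 by lra.
      exists (Rabs (f a)). intros t Ht. replace t with a by lra. lra.
    + destruct lf as [|r3 lf].
      { destruct H as [_ [_ [_ [H _]]]]. simpl in H. discriminate. }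
      pose proof (StepFun_P7 Hab H) as Htail.
      assert (Hr2 : r2 <= b).
      { destruct (Rle_dec r2 b) as [h|h]; [exact h|].
        destruct Htail as [_ [H0 _]]. simpl in H0. rewrite Rmin_right in H0 by lra. lra. }
      destruct (IH f r2 b lf Hr2 Htail) as [M HM].
      destruct H as [_ [H0 [_ [_ Hc]]]]. simpl in H0. rewrite Rmin_left in H0 by lra.
      exists (Rmax (Rabs (f a)) (Rmax (Rabs r3) M)). intros t Ht.
      destruct (Req_dec t a) as [->|Hta]; [apply Rmax_l|].
      destruct (Rlt_le_dec t r2) as [h|h].
      * assert (E : f t = r3).
        { apply (Hc 0%nat); [simpl; lia|]. unfold open_interval. simpl. lra. }
        rewrite E. eapply Rle_trans; [|apply Rmax_r]. apply Rmax_l.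
      * eapply Rle_trans; [|apply Rmax_r]. eapply Rle_trans; [|apply Rmax_r].
        apply HM. lra.
Qed.

(* A Riemann integrable function is bounded: it lies within a step function
   of another step function. *)
Lemma riemann_integrable_bounded f a b : a <= b -> Riemann_integrable f a b ->
  exists M, forall t, a <= t <= b -> Rabs (f t) <= M.
Proof.
  intros Hab pr.
  destruct (pr (mkposreal 1 Rlt_0_1)) as [phi [psi [H _]]].
  destruct (stepfun_bounded _ _ _ _ _ Hab (StepFun_P1 phi)) as [M1 HM1].
  destruct (stepfun_bounded _ _ _ _ _ Hab (StepFun_P1 psi)) as [M2 HM2].
  exists (M1 + M2). intros t Ht.
  rewrite Rmin_left in H by exact Hab. rewrite Rmax_right in H by exact Hab.
  specialize (H t Ht). specialize (HM1 t Ht). specialize (HM2 t Ht).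
  pose proof (Rabs_triang (f t - phi t) (phi t)) as T.
  replace (f t - phi t + phi t) with (f t) in T by ring.
  pose proof (Rle_abs (psi t)). lra.
Qed.

(* A function vanishing outside one point c is a step function (with the
   subdivision a < c < b, or the trivial one if c is not interior). *)
Lemma point_supported_stepfun d a b c : a <= b -> (forall x, x <> c -> d x = 0) ->
  IsStepFun d a b.
Proof.
  intros Hab Hd.
  assert (Hzero : (forall x, a < x < b -> d x = 0) -> IsStepFun d a b).
  { intro Hz. exists (a :: b :: nil). exists (0 :: nil).
    repeat split.
    - intros i Hi. simpl in Hi. destruct i as [|i]; simpl; lra || lia.
    - simpl. rewrite Rmin_left; lra.
    - simpl. rewrite Rmax_right; lra.
    - intros i Hi x Hx. unfold open_interval in Hx. simpl in Hi.
      destruct i as [|i]; simpl in *; [apply Hz; lra | lia]. }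
  destruct (Rlt_dec a c) as [h1|h1]; [destruct (Rlt_dec c b) as [h2|h2]|];
    [| apply Hzero; intros x Hx; apply Hd; lra ..].
  exists (a :: c :: b :: nil). exists (0 :: 0 :: nil).
  repeat split.
  - intros i Hi. simpl in Hi. destruct i as [|[|i]]; simpl; lra || lia.
  - simpl. rewrite Rmin_left; lra.
  - simpl. rewrite Rmax_right; lra.
  - intros i Hi x Hx. unfold open_interval in Hx. simpl in Hi.
    destruct i as [|[|i]]; simpl in *; [apply Hd; lra | apply Hd; lra | lia].
Qed.

Lemma point_supported_integrable d a b c : a <= b -> (forall x, x <> c -> d x = 0) ->
  Riemann_integrable d a b.
Proof.
  intros Hab Hd eps.
  exists (mkStepFun (point_supported_stepfun d a b c Hab Hd)).
  exists (mkStepFun (StepFun_P4 a b 0)).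
  split.
  - intros t _. simpl. rewrite Rminus_diag, Rabs_R0. unfold fct_cte. lra.
  - rewrite StepFun_P18, Rmult_0_l, Rabs_R0. apply cond_pos.
Qed.

Lemma integrable_modify_point h k c a b : (forall x, x <> c -> k x = h x) ->
  Riemann_integrable h a b -> Riemann_integrable k a b.
Proof.
  intros Hk pr.
  assert (Hle : forall a b, a <= b -> Riemann_integrable h a b -> Riemann_integrable k a b).
  { clear a b pr. intros a b Hab pr.
    assert (pd : Riemann_integrable (fun x => k x - h x) a b).
    { apply (point_supported_integrable _ a b c Hab). intros x Hx. rewrite Hk by exact Hx. ring. }
    apply (Riemann_integrable_ext (f := fun x => h x + 1 * (k x - h x))).
    - intros; ring.
    - apply RiemannInt_P10; assumption. }
  destruct (Rle_dec a b) as [h1|h1].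
  - apply Hle; assumption.
  - apply RiemannInt_P1. apply Hle; [lra|]. apply RiemannInt_P1. exact pr.
Qed.

(* ... and does not change the integral: split [a, b] at c and compare the
   two pieces, on whose interiors the functions agree. *)
Lemma integral_modify_point h k c a b (pr1 : Riemann_integrable h a b)
  (pr2 : Riemann_integrable k a b) :
  (forall x, x <> c -> k x = h x) -> RiemannInt pr1 = RiemannInt pr2.
Proof.
  intros Hk.
  assert (Hle : forall a b (pr1 : Riemann_integrable h a b) (pr2 : Riemann_integrable k a b),
             a <= b -> RiemannInt pr1 = RiemannInt pr2).
  { clear a b pr1 pr2. intros a b pr1 pr2 Hab.
    destruct (classic (a < c < b)) as [[h1 h2]|Hc].
    - pose proof (RiemannInt_P22 pr1 (conj (Rlt_le _ _ h1) (Rlt_le _ _ h2))) as p1.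
      pose proof (RiemannInt_P23 pr1 (conj (Rlt_le _ _ h1) (Rlt_le _ _ h2))) as p2.
      pose proof (RiemannInt_P22 pr2 (conj (Rlt_le _ _ h1) (Rlt_le _ _ h2))) as q1.
      pose proof (RiemannInt_P23 pr2 (conj (Rlt_le _ _ h1) (Rlt_le _ _ h2))) as q2.
      rewrite <- (RiemannInt_P26 p1 p2 pr1), <- (RiemannInt_P26 q1 q2 pr2).
      f_equal; apply RiemannInt_P18; try lra; intros x Hx; symmetry; apply Hk; lra.
    - apply RiemannInt_P18; [exact Hab|]. intros x Hx; symmetry; apply Hk; lra. }
  destruct (Rle_dec a b) as [h1|h1].
  - apply Hle; assumption.
  - rewrite (RiemannInt_P8 pr1 (RiemannInt_P1 pr1)), (RiemannInt_P8 pr2 (RiemannInt_P1 pr2)).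
    f_equal. apply Hle; lra.
Qed.

Lemma integral_modify_finite L : forall h k a b, (forall x, ~ In x L -> k x = h x) ->
  inhabited (Riemann_integrable h a b) ->
  inhabited (Riemann_integrable k a b) /\
  forall (pr1 : Riemann_integrable h a b) (pr2 : Riemann_integrable k a b),
    RiemannInt pr1 = RiemannInt pr2.
Proof.
  induction L as [|c L IH]; intros h k a b Hk [pr].
  - assert (E : k = h) by (apply functional_extensionality; intro x; apply Hk; simpl; tauto).
    subst. split; [constructor; exact pr|]. intros; apply RiemannInt_P5.
  - set (k' := fun x => if Req_EM_T x c then h x else k x).
    assert (Hk' : forall x, ~ In x L -> k' x = h x).
    { intros x Hx. unfold k'. destruct (Req_EM_T x c) as [e|e]; [reflexivity|].
      apply Hk. intros [E|E]; [congruence|tauto]. }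
    destruct (IH h k' a b Hk' (inhabits pr)) as [[pr'] Heq].
    assert (Hkk : forall x, x <> c -> k x = k' x).
    { intros x Hx. unfold k'. destruct (Req_EM_T x c); [congruence|reflexivity]. }
    split.
    + constructor. exact (integrable_modify_point _ _ c _ _ Hkk pr').
    + intros pr1 pr2. rewrite (Heq pr1 pr'). apply (integral_modify_point _ _ c). exact Hkk.
Qed.

Lemma derivable_pt_lim_local F1 F2 x l r : r > 0 ->
  (forall t, Rabs (t - x) < r -> F1 t = F2 t) ->
  derivable_pt_lim F1 x l -> derivable_pt_lim F2 x l.
Proof.
  intros Hr HF H eps He. destruct (H eps He) as [del Hd].
  assert (Hm : 0 < Rmin del r) by (apply Rmin_pos; [apply cond_pos | lra]).
  exists (mkposreal _ Hm). intros h Hh Hhd. simpl in Hhd.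
  pose proof (Rmin_l del r). pose proof (Rmin_r del r).
  rewrite <- !HF.
  - apply Hd; [exact Hh | lra].
  - rewrite Rminus_diag, Rabs_R0. lra.
  - replace (x + h - x) with h by ring. lra.
Qed.

Lemma integral_of_primitive (H h : R -> R) (a b : R)
  (dH : forall x, derivable_pt_lim H x (h x)) (ch : continuity h)
  (pr : Riemann_integrable h a b) : RiemannInt pr = H b - H a.
Proof.
  set (d := fun x => exist (fun l => derivable_pt_abs H x l) (h x) (dH x) : derivable_pt H x).
  exact (FTC_Riemann {| c1 := H; diff0 := d; cont1 := ch |} pr).
Qed.

Definition sq (y : R) : R := sqrt (y ^ 2 + 1).

Lemma sq_pos y : 0 < sq y.
Proof. unfold sq. apply sqrt_lt_R0. pose proof (pow2_ge_0 y). lra. Qed.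

Lemma sq_sq y : sq y * sq y = y ^ 2 + 1.
Proof. unfold sq. apply sqrt_sqrt. pose proof (pow2_ge_0 y). lra. Qed.

Lemma sq_opp y : sq (- y) = sq y.
Proof. unfold sq. f_equal. ring. Qed.

Lemma sq_der y : derivable_pt_lim sq y (y / sq y).
Proof.
  assert (D1 : derivable_pt_lim (fun y => y ^ 2 + 1) y (2 * y)).
  { replace (2 * y) with (INR 2 * y ^ (pred 2) + 0) by (simpl; ring).
    apply (derivable_pt_lim_plus (fun y => y ^ 2) (fct_cte 1)).
    - apply derivable_pt_lim_pow.
    - apply derivable_pt_lim_const. }
  assert (D2 : derivable_pt_lim sqrt (y ^ 2 + 1) (/ (2 * sqrt (y ^ 2 + 1)))).
  { apply derivable_pt_lim_sqrt. pose proof (pow2_ge_0 y). lra. }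
  replace (y / sq y) with (/ (2 * sqrt (y ^ 2 + 1)) * (2 * y)).
  - exact (derivable_pt_lim_comp _ _ _ _ _ D1 D2).
  - pose proof (sq_pos y). unfold sq in *. field. lra.
Qed.

Definition uu (y : R) : R := y + sq y.
Definition vv (y : R) : R := y - sq y.

Lemma uu_der y : derivable_pt_lim uu y (1 + y / sq y).
Proof. apply (derivable_pt_lim_plus id sq); [apply derivable_pt_lim_id | apply sq_der]. Qed.

Lemma vv_der y : derivable_pt_lim vv y (1 - y / sq y).
Proof. apply (derivable_pt_lim_minus id sq); [apply derivable_pt_lim_id | apply sq_der]. Qed.

Lemma uv_facts y : uu y > 0 /\ vv y < 0 /\ uu y * vv y = -1.
Proof.
  pose proof (sq_pos y). pose proof (sq_sq y).
  assert (y < sq y /\ - y < sq y) by (split; nra).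
  unfold uu, vv. repeat split; lra.
Qed.

Lemma uu_opp y : uu (- y) = - vv y.
Proof. unfold uu, vv. rewrite sq_opp. ring. Qed.

Lemma uv_zero : uu 0 = 1 /\ vv 0 = -1.
Proof.
  unfold uu, vv, sq. replace (0 ^ 2 + 1) with 1 by ring. rewrite sqrt_1. split; ring.
Qed.

(* Both u and v are inverted by r |-> (r^2 - 1)/(2r); this bounds the set of
   y whose image under u or v falls into a given finite set. *)
Lemma uv_inverse y r : (r = uu y \/ r = vv y) -> y = (r * r - 1) / (2 * r).
Proof.
  intros Hr. pose proof (sq_sq y). pose proof (uv_facts y).
  assert (Hr0 : r <> 0) by (destruct Hr; subst; lra).
  assert (E : r * r - 1 = y * (2 * r)) by (destruct Hr; subst; unfold uu, vv in *; nra).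
  rewrite E. field. exact Hr0.
Qed.

(* v b -> 0 as b -> +oo, since v b = -1 / u b and u b > b. *)
Lemma vv_small d b : d > 0 -> 1 / d <= b -> Rabs (vv b) < d.
Proof.
  intros Hd Hb. destruct (uv_facts b) as [H3 [H4 H5]].
  assert (Hgt : uu b > b) by (pose proof (sq_pos b); unfold uu; lra).
  assert (Hu : d * uu b > 1).
  { assert (H : uu b > 1 / d) by lra.
    apply (Rmult_lt_compat_l d) in H; [|exact Hd].
    replace (d * (1 / d)) with 1 in H by (field; lra). lra. }
  rewrite Rabs_left by exact H4.
  apply (Rmult_lt_reg_r (uu b)); [exact H3|]. nra.
Qed.

Lemma uu_small d a : d > 0 -> a <= - (1 / d) -> Rabs (uu a) < d.
Proof.
  intros Hd Ha. replace a with (- - a) by ring.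
  rewrite uu_opp, Rabs_Ropp. apply vv_small; lra.
Qed.

Lemma rhs_integrand_chain g y : rhs_integrand g y =
  g (uu y) * (1 + y / sq y) + g (vv y) * (1 - y / sq y).
Proof. unfold rhs_integrand, uu, vv, sq. ring. Qed.

(* If f = p/q off the roots of q and f is integrable on compact intervals,
   then f has a punctured limit at every point x, equal to f x when
   q x <> 0: f is bounded near x, hence so is p/q, which therefore has a
   limit at x. *)
Lemma rational_punct_lim f p q (Hq : nonzero_poly q)
  (Hf : forall x, peval q x <> 0 -> f x = peval p x / peval q x)
  (Hint : forall a b, inhabited (Riemann_integrable f a b)) x :
  exists c, punct_lim f x c /\ (peval q x <> 0 -> c = f x).
Proof.
  destruct (poly_roots_finite q Hq) as [L HL].
  destruct (list_isolated L x) as [r [Hr Hiso]].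
  assert (Hnz : forall y, y <> x -> Rabs (y - x) < r -> peval q y <> 0).
  { intros y H1 H2 E. apply (Hiso y H1 H2). apply HL. exact E. }
  (* near x (but not at x), f is given by the formula p/q *)
  assert (Htransfer : forall c, rat_limit p q x c -> punct_lim f x c).
  { intros c Hc eps He. destruct (Hc eps He) as [d [Hd H]].
    exists (Rmin d r). split; [apply Rmin_pos; lra|]. intros y Hy Hyd.
    pose proof (Rmin_l d r). pose proof (Rmin_r d r).
    assert (Hqy : peval q y <> 0) by (apply Hnz; auto; lra).
    rewrite Hf by exact Hqy. apply H; auto. lra. }
  destruct (Req_dec (peval q x) 0) as [Hqx|Hqx].
  - destruct (Hint (x - 1) (x + 1)) as [pr].
    destruct (riemann_integrable_bounded f (x - 1) (x + 1) ltac:(lra) pr) as [M HM].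
    destruct (rat_bounded_has_limit p q x Hq) as [c Hc].
    + exists M, 1. split; [lra|]. intros y Hy Hyd Hqy. rewrite <- Hf by exact Hqy.
      apply HM. apply Rabs_def2 in Hyd. lra.
    + exists c. split; [apply Htransfer; exact Hc | contradiction].
  - exists (f x). split; [|reflexivity]. apply Htransfer.
    rewrite (Hf x Hqx). apply rat_limit_regular. exact Hqx.
Qed.

Lemma rational_regularization f p q : nonzero_poly q ->
  (forall x, peval q x <> 0 -> f x = peval p x / peval q x) ->
  (forall a b, inhabited (Riemann_integrable f a b)) ->
  exists g L, (forall x, punct_lim f x (g x)) /\ (forall x, ~ In x L -> f x = g x).
Proof.
  intros Hq Hf Hint.
  destruct (poly_roots_finite q Hq) as [L HL].
  assert (Hch : forall x, {c | punct_lim f x c /\ (peval q x <> 0 -> c = f x)}).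
  { intro x. apply constructive_indefinite_description.
    exact (rational_punct_lim f p q Hq Hf Hint x). }
  exists (fun x => proj1_sig (Hch x)), L. split.
  - intro x. exact (proj1 (proj2_sig (Hch x))).
  - intros x Hx. symmetry. apply (proj2 (proj2_sig (Hch x))).
    intro E. apply Hx, HL, E.
Qed.

Lemma punct_lim_even f g : (forall x, f (- x) = f x) ->
  (forall x, punct_lim f x (g x)) -> forall x, g (- x) = g x.
Proof.
  intros Hev Hg x. apply (punct_lim_unique f x); [|apply Hg].
  intros eps He. destruct (Hg (- x) eps He) as [d [Hd H]].
  exists d. split; [exact Hd|]. intros y Hy Hyd.
  rewrite <- (Hev y). apply H; [intro E; apply Hy; lra|].
  replace (- y - - x) with (- (y - x)) by ring. rewrite Rabs_Ropp. exact Hyd.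
Qed.

Lemma rhs_integrand_modify_finite f g L : (forall x, ~ In x L -> f x = g x) ->
  exists L', forall y, ~ In y L' -> rhs_integrand f y = rhs_integrand g y.
Proof.
  intros Hfg. exists (map (fun r => (r * r - 1) / (2 * r)) L). intros y Hy.
  assert (Hpre : forall r, (r = uu y \/ r = vv y) -> ~ In r L).
  { intros r Hr Hi. apply Hy. rewrite (uv_inverse y r Hr).
    apply (in_map (fun r => (r * r - 1) / (2 * r))). exact Hi. }
  rewrite !rhs_integrand_chain, (Hfg (uu y)), (Hfg (vv y)); auto.
Qed.

Definition line_limit (F : R -> R) (l : R) : Prop :=
  forall eps, eps > 0 -> exists M, forall a b, a <= - M -> M <= b ->
    Rabs (F b - F a - l) < eps.

Definition ray_limit (F : R -> R) (l : R) : Prop :=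
  forall eps, eps > 0 -> exists M, forall b, M <= b -> Rabs (F b - F 0 - l) < eps.

Definition cont_integrable (g : R -> R) (cg : continuity g) (a b : R) :
  Riemann_integrable g a b :=
  match Rle_dec a b with
  | left h => continuity_implies_RiemannInt h (fun x _ => cg x)
  | right h => RiemannInt_P1 (continuity_implies_RiemannInt
                  (Rlt_le _ _ (Rnot_le_lt _ _ h)) (fun x _ => cg x))
  end.

Lemma integral_via_primitive L (h g F : R -> R) : continuity g ->
  (forall x, derivable_pt_lim F x (g x)) -> (forall x, ~ In x L -> h x = g x) ->
  forall a b, inhabited (Riemann_integrable h a b) /\
    forall pr : Riemann_integrable h a b, RiemannInt pr = F b - F a.
Proof.
  intros cg dF Hhg a b.
  destruct (integral_modify_finite L g h a b Hhg (inhabits (cont_integrable g cg a b)))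
    as [Hh Heq].
  split; [exact Hh|]. intro pr.
  rewrite <- (Heq (cont_integrable g cg a b) pr). apply integral_of_primitive; assumption.
Qed.

Section Integrals.
Variables (h F : R -> R).
Hypothesis h_prim : forall a b, inhabited (Riemann_integrable h a b) /\
  forall pr : Riemann_integrable h a b, RiemannInt pr = F b - F a.

Lemma improper_int_R_primitive l : improper_int_R h l <-> line_limit F l.
Proof.
  split.
  - intros [_ Hlim] eps He. destruct (Hlim eps He) as [M HM]. exists M. intros a b Ha Hb.
    destruct (proj1 (h_prim a b)) as [pr]. rewrite <- (proj2 (h_prim a b) pr). auto.
  - intros Hlim. split; [intros a b; apply h_prim|]. intros eps He.
    destruct (Hlim eps He) as [M HM]. exists M. intros a b pr Ha Hb.
    rewrite (proj2 (h_prim a b) pr). auto.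
Qed.

Lemma improper_int_pos_primitive l : ray_limit F l -> improper_int_pos h l.
Proof.
  intros Hlim. split; [intros b; apply h_prim|]. intros eps He.
  destruct (Hlim eps He) as [M HM]. exists M. intros b pr Hb.
  rewrite (proj2 (h_prim 0 b) pr). auto.
Qed.

End Integrals.

Section Primitive.
Variable g : R -> R.
Hypothesis g_cont : continuity g.

Definition prim (t : R) : R := RiemannInt (cont_integrable g g_cont 0 t).

Lemma prim_diff a b (pr : Riemann_integrable g a b) : RiemannInt pr = prim b - prim a.
Proof.
  unfold prim. rewrite <- (RiemannInt_P26 (cont_integrable g g_cont 0 a) pr
                           (cont_integrable g g_cont 0 b)).
  ring.
Qed.

Lemma prim0 : prim 0 = 0.
Proof. unfold prim. apply RiemannInt_P9. Qed.

(* prim' = g: locally, prim differs by a constant from the library's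
   primitive on [x - 1, x + 1]. *)
Lemma prim_der x : derivable_pt_lim prim x (g x).
Proof.
  assert (Hx : x - 1 <= x + 1) by lra.
  pose proof (RiemannInt_P28 (f := g) (x := x) Hx (fun y _ => g_cont y) ltac:(lra)) as D.
  set (P := primitive Hx (FTC_P1 Hx (fun (y : R) (_ : x - 1 <= y <= x + 1) => g_cont y))) in D.
  apply (derivable_pt_lim_local (fun t => prim (x - 1) + P t) _ x _ 1); [lra| |].
  - intros t Ht. apply Rabs_def2 in Ht. unfold P, primitive.
    destruct (Rle_dec (x - 1) t) as [h1|h1]; [|lra].
    destruct (Rle_dec t (x + 1)) as [h2|h2]; [|lra].
    rewrite prim_diff. ring.
  - replace (g x) with (0 + g x) by ring.
    apply (derivable_pt_lim_plus (fct_cte (prim (x - 1))) P); [apply derivable_pt_lim_const|].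
    exact D.
Qed.

Lemma prim_small_near_0 eps : eps > 0 ->
  exists d, d > 0 /\ forall t, Rabs t < d -> Rabs (prim t) < eps.
Proof.
  intros He.
  assert (Hc : continuity_pt prim 0)
    by (apply derivable_continuous_pt; exists (g 0); apply prim_der).
  destruct (continuity_pt_eps _ _ Hc eps He) as [d [Hd H]].
  exists d. split; [exact Hd|]. intros t Ht. specialize (H t).
  rewrite prim0, !Rminus_0_r in H. apply H; exact Ht.
Qed.

Definition prim_uv (y : R) : R := prim (uu y) + prim (vv y).

Lemma prim_uv_der y : derivable_pt_lim prim_uv y (rhs_integrand g y).
Proof.
  rewrite rhs_integrand_chain.
  apply (derivable_pt_lim_plus (comp prim uu) (comp prim vv)).
  - apply derivable_pt_lim_comp; [apply uu_der | apply prim_der].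
  - apply derivable_pt_lim_comp; [apply vv_der | apply prim_der].
Qed.

Lemma rhs_integrand_continuous : continuity (rhs_integrand g).
Proof.
  intro y.
  assert (C : forall F l, derivable_pt_lim F y l -> continuity_pt F y)
    by (intros F l D; apply derivable_continuous_pt; exists l; exact D).
  assert (Cq : continuity_pt (fun y => y / sq y) y).
  { change (continuity_pt (div_fct id sq) y). apply continuity_pt_div.
    - apply derivable_continuous_pt, derivable_pt_id.
    - exact (C _ _ (sq_der y)).
    - pose proof (sq_pos y). lra. }
  assert (C1 : continuity_pt (fct_cte 1) y)
    by (apply continuity_pt_const; intros ? ?; reflexivity).
  replace (rhs_integrand g) with
    (plus_fct (mult_fct (comp g uu) (plus_fct (fct_cte 1) (fun y => y / sq y)))
              (mult_fct (comp g vv) (minus_fct (fct_cte 1) (fun y => y / sq y))))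
    by (apply functional_extensionality; intro t; rewrite rhs_integrand_chain; reflexivity).
  apply continuity_pt_plus; apply continuity_pt_mult.
  - apply continuity_pt_comp; [exact (C _ _ (uu_der y)) | apply g_cont].
  - apply continuity_pt_plus; assumption.
  - apply continuity_pt_comp; [exact (C _ _ (vv_der y)) | apply g_cont].
  - apply continuity_pt_minus; assumption.
Qed.

(* Whole line: H b - H a = (G(u b) - G(v a)) + (G(v b) - G(u a)), where
   u b -> +oo, v a -> -oo and v b, u a -> 0. *)
Lemma prim_uv_line_limit l : line_limit prim l -> line_limit prim_uv l.
Proof.
  intros Hlim eps He.
  destruct (Hlim (eps / 2) ltac:(lra)) as [M1 HM1].
  destruct (prim_small_near_0 (eps / 4) ltac:(lra)) as [d [Hd Hc]].
  set (M := Rmax M1 (Rmax 0 (1 / d))).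
  assert (R1 : M1 <= M) by apply Rmax_l.
  assert (R2 : 0 <= M /\ 1 / d <= M)
    by (unfold M; pose proof (Rmax_r M1 (Rmax 0 (1 / d))); pose proof (Rmax_l 0 (1 / d));
        pose proof (Rmax_r 0 (1 / d)); lra).
  exists M. intros a b Ha Hb. unfold prim_uv.
  assert (Hua : uu a > a) by (pose proof (sq_pos a); unfold uu; lra).
  assert (Hub : uu b > b) by (pose proof (sq_pos b); unfold uu; lra).
  assert (Hva : vv a < a) by (pose proof (sq_pos a); unfold vv; lra).
  specialize (HM1 (vv a) (uu b) ltac:(lra) ltac:(lra)).
  pose proof (Hc (vv b) (vv_small d b Hd ltac:(lra))) as Hc1.
  pose proof (Hc (uu a) (uu_small d a Hd ltac:(lra))) as Hc2.
  replace (prim (uu b) + prim (vv b) - (prim (uu a) + prim (vv a)) - l)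
    with ((prim (uu b) - prim (vv a) - l) + (prim (vv b) - prim (uu a))) by ring.
  pose proof (Rabs_triang (prim (uu b) - prim (vv a) - l) (prim (vv b) - prim (uu a))).
  pose proof (Rabs_triang (prim (vv b)) (- prim (uu a))) as T.
  rewrite Rabs_Ropp in T.
  change (prim (vv b) + - prim (uu a)) with (prim (vv b) - prim (uu a)) in T. lra.
Qed.

Section Even.
Hypothesis g_even : forall x, g (- x) = g x.

(* The primitive of an even function vanishing at 0 is odd:
   t |-> G t + G (-t) has derivative 0. *)
Lemma prim_odd t : prim (- t) = - prim t.
Proof.
  assert (D : forall x, derivable_pt_lim (plus_fct prim (comp prim (opp_fct id))) x
                                         (fct_cte 0 x)).
  { intro x. replace (fct_cte 0 x) with (g x + g (- x) * (-1)).
    - apply derivable_pt_lim_plus; [apply prim_der|].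
      apply derivable_pt_lim_comp; [| apply prim_der].
      apply derivable_pt_lim_opp. apply derivable_pt_lim_id.
    - unfold fct_cte. rewrite g_even. ring. }
  assert (C : continuity (fct_cte 0)) by (apply continuity_const; intros ? ?; reflexivity).
  pose proof (integral_of_primitive _ _ 0 t D C (RiemannInt_P14 0 t 0)) as E.
  rewrite RiemannInt_P15 in E. unfold plus_fct, comp, opp_fct, id in E.
  rewrite Ropp_0, prim0 in E. lra.
Qed.

(* Hence G(b) = (G b - G(-b)) / 2 tends to l/2. *)
Lemma prim_ray_limit l : line_limit prim l -> ray_limit prim (l / 2).
Proof.
  intros Hlim eps He. destruct (Hlim eps He) as [M HM]. exists (Rmax M 0).
  intros b Hb. pose proof (Rmax_l M 0). pose proof (Rmax_r M 0).
  specialize (HM (- b) b ltac:(lra) ltac:(lra)). rewrite prim_odd in HM.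
  rewrite prim0, Rminus_0_r.
  replace (prim b - - prim b - l) with (2 * (prim b - l / 2)) in HM by field.
  rewrite Rabs_mult, (Rabs_right 2) in HM by lra. lra.
Qed.

(* Half line: H 0 = G 1 + G (-1) = 0, and H b = G(u b) + G(v b) with
   u b -> +oo and v b -> 0. *)
Lemma prim_uv_ray_limit l : line_limit prim l -> ray_limit prim_uv (l / 2).
Proof.
  intros Hlim eps He.
  destruct (prim_ray_limit l Hlim (eps / 2) ltac:(lra)) as [M HM].
  destruct (prim_small_near_0 (eps / 2) ltac:(lra)) as [d [Hd Hc]].
  exists (Rmax M (1 / d)). intros b Hb.
  pose proof (Rmax_l M (1 / d)). pose proof (Rmax_r M (1 / d)).
  assert (Huv0 : prim_uv 0 = 0).
  { unfold prim_uv. destruct uv_zero as [-> ->].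
    replace (-1) with (- (1)) by ring. rewrite prim_odd. ring. }
  rewrite Huv0, Rminus_0_r. unfold prim_uv.
  assert (Hub : uu b > b) by (pose proof (sq_pos b); unfold uu; lra).
  specialize (HM (uu b) ltac:(lra)). rewrite prim0, Rminus_0_r in HM.
  specialize (Hc (vv b) (vv_small d b Hd ltac:(lra))).
  replace (prim (uu b) + prim (vv b) - l / 2) with ((prim (uu b) - l / 2) + prim (vv b))
    by ring.
  pose proof (Rabs_triang (prim (uu b) - l / 2) (prim (vv b))). lra.
Qed.

End Even.
End Primitive.

Theorem mainTheorem3 (f : R -> R) :
  is_rational_fun f ->
  (exists l, improper_int_R f l) ->
  (exists l, improper_int_R (fun x => Rabs (f x)) l) ->
  (exists I, improper_int_R f I /\ improper_int_R (rhs_integrand f) I) /\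
  ((forall x, f (- x) = f x) ->
   exists I, improper_int_pos f I /\ improper_int_pos (rhs_integrand f) I).
Proof.
  intros [p [q [Hq Hf]]] [l Hl] _.
  destruct (rational_regularization f p q Hq Hf (proj1 Hl)) as [g [L [Hg Hfg]]].
  pose proof (punct_lim_continuous f g Hg) as g_cont.
  destruct (rhs_integrand_modify_finite f g L Hfg) as [L' Hrhs].
  pose proof (integral_via_primitive L f g (prim g g_cont) g_cont (prim_der g g_cont) Hfg)
    as Hf_prim.
  pose proof (integral_via_primitive L' (rhs_integrand f) (rhs_integrand g)
    (prim_uv g g_cont) (rhs_integrand_continuous g g_cont) (prim_uv_der g g_cont) Hrhs)
    as Hrhs_prim.
  pose proof (proj1 (improper_int_R_primitive _ _ Hf_prim l) Hl) as Hline.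
  split.
  - exists l. split; [exact Hl|].
    apply (improper_int_R_primitive _ _ Hrhs_prim), prim_uv_line_limit. exact Hline.
  - intro Hev. pose proof (punct_lim_even f g Hev Hg) as g_even.
    exists (l / 2). split.
    + apply (improper_int_pos_primitive _ _ Hf_prim), prim_ray_limit; assumption.
    + apply (improper_int_pos_primitive _ _ Hrhs_prim), prim_uv_ray_limit; assumption.
Qed.
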